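(* Let $0<q<1$. Then \[ \sum_{n=0}^{\infty}\frac{(1/2|q^{2})_{n}^{2}}{[n]_{q^{2}}!\,[n+1]_{q^{2}}!}\,q^{2n}=\frac{(1+q)^{2}q^{1/4}}{\pi_{q}}. \]
   Context: Let $0<q<1$ and write $q^{x}=e^{x\log q}$. $[z]_{q^2}=\frac{1-q^{2z}}{1-q^2}$; $[0]_{q^2}!=1$, $[n]_{q^2}!=\prod_{k=1}^n[k]_{q^2}$; $(1/2|q^2)_n=\prod_{k=0}^{n-1}[1/2+k]_{q^2}$ (empty product $=1$). With $(z;q)_\infty=\prod_{k\ge0}(1-zq^k)$, $\pi_q=(1-q^2)q^{1/4}\frac{(q^2;q^2)_\infty^2}{(q;q^2)_\infty^2}$. *)

From Stdlib Require Import Reals.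
Open Scope R_scope.

Definition qpow (q x : R) : R := exp (x * ln q).

Definition qnum2 (q z : R) : R := (1 - qpow q (2 * z)) / (1 - q ^ 2).

Fixpoint qfact2 (q : R) (n : nat) : R :=
  match n with
  | O => 1
  | S m => qfact2 q m * qnum2 q (INR (S m))
  end.

(* (1/2 | q^2)_n = prod_{k=0}^{n-1} [1/2 + k]_{q^2} *)
Fixpoint qhalf2 (q : R) (n : nat) : R :=
  match n with
  | O => 1
  | S m => qhalf2 q m * qnum2 q (/2 + INR m)
  end.

Fixpoint qpoch_partial (z a : R) (N : nat) : R :=
  match N with
  | O => 1
  | S m => qpoch_partial z a m * (1 - z * a ^ m)
  end.

(* (z;a)_infty = P means the partial products converge to P *)
Definition qpoch_inf (z a P : R) : Prop := Un_cv (qpoch_partial z a) P.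

(* pi_q in terms of the values A = (q^2;q^2)_infty, B = (q;q^2)_infty *)
Definition pi_q (q A B : R) : R :=
  (1 - q ^ 2) * qpow q (/4) * (A ^ 2 / B ^ 2).

Definition term5 (q : R) (n : nat) : R :=
  (qhalf2 q n) ^ 2 / (qfact2 q n * qfact2 q (S n)) * q ^ (2 * n).

From Stdlib Require Import Reals Lra Lia.
Open Scope R_scope.

(* The series telescopes: with [x = q^(2n)] one has
   [(1-qx)^2 - (1-x)(1-q^2 x) = (1-q)^2 x], i.e.
   [(1+q)^2 ([n+1/2]^2 - [n][n+1]) = q^(2n)], so the N-th partial sum is
   [(1+q)^2 (1/2|q^2)_(N+1)^2 / ([N]! [N+1]!)].  Clearing the factors
   [1-q^2] turns this into a quotient of partial products of [(q;q^2)_oo] and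
   [(q^2;q^2)_oo], whose limit is [(1+q)^2 B^2 / ((1-q^2) A^2)].  Passing to
   the limit needs [A <> 0], which follows from [1 - x >= exp(-x/(1-z))]. *)

Lemma CV_const (c : R) : Un_cv (fun _ => c) c.
Proof. intros e he; exists 0%nat; intros n _; rewrite R_dist_eq; lra. Qed.

Lemma CV_S (u : nat -> R) (l : R) : Un_cv u l -> Un_cv (fun n => u (S n)) l.
Proof. intros H e he; destruct (H e he) as [N HN]; exists N; intros n hn; apply HN; lia. Qed.

Lemma CV_ext (u v : nat -> R) (l : R) : (forall n, u n = v n) -> Un_cv u l -> Un_cv v l.
Proof. intros E H e he; destruct (H e he) as [N HN]; exists N; intros n hn; rewrite <- E; auto. Qed.

Lemma CV_div (u v : nat -> R) (a b : R) :
  b <> 0 -> Un_cv u a -> Un_cv v b -> Un_cv (fun n => u n / v n) (a / b).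
Proof.
  intros hb hu hv; apply CV_mult; [exact hu|].
  apply (continuity_seq (/ id)%F v b); [|exact hv].
  apply continuity_pt_inv; [apply derivable_continuous_pt, derivable_pt_id|exact hb].
Qed.

Lemma exp_le_compat (x y : R) : x <= y -> exp x <= exp y.
Proof. intros [Hlt|<-]; [left; apply exp_increasing, Hlt|right; reflexivity]. Qed.

(* [exp y >= 1 + y >= 1/(1-x)] for [y = x/(1-z)]. *)
Lemma exp_opp_le_one_sub (x z : R) :
  0 <= x <= z -> z < 1 -> exp (- (x / (1 - z))) <= 1 - x.
Proof.
  intros [hx hxz] hz.
  set (y := x / (1 - z)).
  assert (hy : (1 - x) * (1 + y) >= 1).
  { unfold y; apply Rle_ge.
    replace ((1 - x) * (1 + x / (1 - z))) with (1 + x * (z - x) / (1 - z)) by (field; lra).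
    assert (0 <= x * (z - x) / (1 - z)).
    { apply Rmult_le_pos; [nra|left; apply Rinv_0_lt_compat; lra]. }
    lra. }
  pose proof (exp_ineq1_le y) as hexp.
  pose proof (exp_pos y) as hpos.
  rewrite exp_Ropp.
  apply (Rmult_le_reg_r (exp y)); [exact hpos|].
  rewrite Rinv_l by lra. nra.
Qed.

Lemma qpoch_partial_ge_exp (z a : R) (N : nat) : 0 <= z < 1 -> 0 < a < 1 ->
  exp (- (z / (1 - z) * ((1 - a ^ N) / (1 - a)))) <= qpoch_partial z a N.
Proof.
  intros hz ha; induction N as [|N IH]; cbn [qpoch_partial].
  - replace (- (z / (1 - z) * ((1 - a ^ 0) / (1 - a)))) with 0 by (simpl; field; lra).
    rewrite exp_0; lra.
  - assert (0 <= a ^ N <= 1).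
    { split; [apply pow_le; lra|rewrite <- (pow1 N); apply pow_incr; lra]. }
    replace (- (z / (1 - z) * ((1 - a ^ S N) / (1 - a)))) with
      (- (z / (1 - z) * ((1 - a ^ N) / (1 - a))) + - (z * a ^ N / (1 - z)))
      by (simpl; field; lra).
    rewrite exp_plus.
    apply Rmult_le_compat; try (left; apply exp_pos); [exact IH|].
    apply exp_opp_le_one_sub; [split|]; nra.
Qed.

Lemma qpoch_inf_pos (z a P : R) : 0 <= z < 1 -> 0 < a < 1 -> qpoch_inf z a P -> 0 < P.
Proof.
  intros hz ha hP.
  set (K := z / (1 - z) / (1 - a)).
  assert (0 <= K).
  { unfold K, Rdiv; apply Rmult_le_pos; [apply Rmult_le_pos|]; try lra;
      left; apply Rinv_0_lt_compat; lra. }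
  apply Rlt_le_trans with (exp (- K)); [apply exp_pos|].
  apply (Rle_cv_lim (Un := fun _ => exp (- K)) (Vn := qpoch_partial z a));
    [|apply CV_const|exact hP].
  intro n; apply Rle_trans with (2 := qpoch_partial_ge_exp z a n hz ha), exp_le_compat.
  assert (0 <= a ^ n) by (apply pow_le; lra).
  replace (z / (1 - z) * ((1 - a ^ n) / (1 - a))) with (K * (1 - a ^ n)) by (unfold K; field; lra).
  nra.
Qed.

Lemma qpow_nat (q : R) (n : nat) : 0 < q -> qpow q (INR n) = q ^ n.
Proof. intro hq; unfold qpow; rewrite <- Rpower_pow by exact hq; reflexivity. Qed.

Section QNumbers.

Variable q : R.
Hypothesis hq0 : 0 < q.
Hypothesis hq1 : q < 1.

Let hq2 : 1 - q ^ 2 <> 0.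
Proof. nra. Qed.

Lemma qnum2_nat (n : nat) : qnum2 q (INR n) = (1 - (q ^ 2) ^ n) / (1 - q ^ 2).
Proof.
  unfold qnum2; rewrite <- pow_mult, <- (qpow_nat q (2 * n)) by exact hq0.
  rewrite mult_INR; reflexivity.
Qed.

Lemma qnum2_half (n : nat) : qnum2 q (/2 + INR n) = (1 - q * (q ^ 2) ^ n) / (1 - q ^ 2).
Proof.
  unfold qnum2.
  replace (q * (q ^ 2) ^ n) with (q ^ S (2 * n)) by (rewrite <- pow_mult; reflexivity).
  rewrite <- (qpow_nat q (S (2 * n))) by exact hq0.
  do 3 f_equal; rewrite S_INR, mult_INR; simpl; field.
Qed.

Lemma qnum2_half_sqr_sub (n : nat) :
  (1 + q) ^ 2 * (qnum2 q (/2 + INR n) ^ 2 - qnum2 q (INR n) * qnum2 q (INR (S n)))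
  = (q ^ 2) ^ n.
Proof.
  rewrite qnum2_half, !qnum2_nat.
  change ((q ^ 2) ^ S n) with (q ^ 2 * (q ^ 2) ^ n).
  field; exact hq2.
Qed.

Lemma qfact2_pos (n : nat) : 0 < qfact2 q n.
Proof.
  induction n as [|n IH]; cbn [qfact2]; [lra|].
  apply Rmult_lt_0_compat; [exact IH|].
  rewrite qnum2_nat.
  assert ((q ^ 2) ^ S n < 1) by (apply pow_lt_1_compat; [split|lia]; nra).
  apply Rdiv_lt_0_compat; nra.
Qed.

Lemma qfact2_qpoch (n : nat) :
  qfact2 q n * (1 - q ^ 2) ^ n = qpoch_partial (q ^ 2) (q ^ 2) n.
Proof.
  induction n as [|n IH]; cbn [qfact2 qpoch_partial]; [simpl; ring|].
  rewrite <- IH, qnum2_nat.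
  change ((q ^ 2) ^ S n) with (q ^ 2 * (q ^ 2) ^ n).
  change ((1 - q ^ 2) ^ S n) with ((1 - q ^ 2) * (1 - q ^ 2) ^ n).
  field; exact hq2.
Qed.

Lemma qhalf2_qpoch (n : nat) :
  qhalf2 q n * (1 - q ^ 2) ^ n = qpoch_partial q (q ^ 2) n.
Proof.
  induction n as [|n IH]; cbn [qhalf2 qpoch_partial]; [simpl; ring|].
  rewrite <- IH, qnum2_half.
  change ((1 - q ^ 2) ^ S n) with ((1 - q ^ 2) * (1 - q ^ 2) ^ n).
  field; exact hq2.
Qed.

Lemma sum_term5 (N : nat) :
  sum_f_R0 (term5 q) N = (1 + q) ^ 2 * qhalf2 q (S N) ^ 2 / (qfact2 q N * qfact2 q (S N)).
Proof.
  induction N as [|N IH]; cbn [sum_f_R0]; [|rewrite IH];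
    unfold term5; rewrite pow_mult, <- qnum2_half_sqr_sub; cbn [qfact2 qhalf2].
  - pose proof (qfact2_pos 1) as h1; cbn [qfact2] in h1.
    rewrite (qnum2_nat 0), pow_O; field; split; [lra|exact hq2].
  - pose proof (qfact2_pos N) as h0.
    pose proof (qfact2_pos (S N)) as h1.
    pose proof (qfact2_pos (S (S N))) as h2.
    cbn [qfact2] in h1, h2.
    field; split; nra.
Qed.

Lemma sum_term5_qpoch (N : nat) :
  sum_f_R0 (term5 q) N =
  (1 + q) ^ 2 / (1 - q ^ 2) * (qpoch_partial q (q ^ 2) (S N) * qpoch_partial q (q ^ 2) (S N))
  / (qpoch_partial (q ^ 2) (q ^ 2) N * qpoch_partial (q ^ 2) (q ^ 2) (S N)).
Proof.
  rewrite sum_term5, <- !qfact2_qpoch, <- !qhalf2_qpoch.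
  pose proof (qfact2_pos N); pose proof (qfact2_pos (S N)).
  assert ((1 - q ^ 2) ^ N <> 0) by (apply pow_nonzero, hq2).
  cbn [pow]; field; repeat split; try lra; auto.
Qed.

End QNumbers.

Theorem mainTheorem5 (q A B : R) (hq0 : 0 < q) (hq1 : q < 1)
  (hA : qpoch_inf (q ^ 2) (q ^ 2) A) (hB : qpoch_inf q (q ^ 2) B) :
  infinite_sum (term5 q) ((1 + q) ^ 2 * qpow q (/4) / pi_q q A B).
Proof.
  assert (hq2 : 0 < q ^ 2 < 1) by (split; nra).
  assert (hApos : 0 < A) by (apply (qpoch_inf_pos (q ^ 2) (q ^ 2)); [lra|lra|exact hA]).
  assert (hBpos : 0 < B) by (apply (qpoch_inf_pos q (q ^ 2)); [lra|lra|exact hB]).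
  replace ((1 + q) ^ 2 * qpow q (/4) / pi_q q A B)
    with ((1 + q) ^ 2 / (1 - q ^ 2) * (B * B) / (A * A)).
  2:{ unfold pi_q; pose proof (exp_pos (/4 * ln q)); unfold qpow; field; nra. }
  change (Un_cv (sum_f_R0 (term5 q)) ((1 + q) ^ 2 / (1 - q ^ 2) * (B * B) / (A * A))).
  apply (CV_ext _ _ _ (fun N => eq_sym (sum_term5_qpoch q hq0 hq1 N))).
  apply CV_div; [nra| |].
  - apply CV_mult; [apply CV_const|apply CV_mult; apply CV_S, hB].
  - apply CV_mult; [exact hA|apply CV_S, hA].
Qed.
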